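(* For all sufficiently small $a>0$: if $(x,y)\in R$, $x\ne2$, $|y|\le a$ and $(x,y)\notin V_a$, then $\mathbf{W}(x,y)\notin V_a$. Furthermore, a $\mathbf{W}$-orbit $(z_k)$ converges to $p_0$ if and only if there exist $a'\in(0,1/10]$ and $k_0$ such that $z_k\in V_{a'}$ for all $k\ge k_0$.
   Context: For $x>0$, $y\in\mathbb{R}$ let $r_1^2=4+x^2+4x^2y^2$, $\Delta=((x+2)^2+8x^2y^2)((x-2)^2+8x^2y^2)$ and $\omega_\pm(x,y)=\frac{x^2-4\pm\sqrt{\Delta}}{2r_1^2}$. Let $p_0=(2,0)$, $R=\{(x,y): x>0,\ 4-4y^2-x^2y^2-8x^2y^4\ge 0\}$, $R_+=R\cap((0,2]\times\mathbb{R})$, $R_-=R\cap([2,\infty)\times\mathbb{R})$, and $r$ the line $x=2$. Define $\mathbf{W}_\pm(x,y)=\left(\frac{1+\omega_\pm}{1-\omega_\pm}x,\ \frac{|\omega_\pm|}{1+\omega_\pm}y\right)$ on $R_\pm$, and $\mathbf{W}$ on $R\setminus(r\setminus\{p_0\})$ by $\mathbf{W}=\mathbf{W}_+$ for $x<2$, $\mathbf{W}=\mathbf{W}_-$ for $x>2$, $\mathbf{W}(p_0)=p_0$. The $\mathbf{W}$-orbit of $z_0$ is $z_{k+1}=\mathbf{W}(z_k)$, defined as long as no $z_k$ lies on $r\setminus\{p_0\}$. For $0<a\le1/10$, $V_a=\{(x,y): |y|\le a,\ |y|\ge|x-2|/10\}$. *)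

From Stdlib Require Import Reals Lra.
From Coquelicot Require Import Coquelicot.
Open Scope R_scope.

Definition r1sq (x y : R) : R := 4 + x^2 + 4 * x^2 * y^2.

Definition Delta (x y : R) : R :=
  ((x + 2)^2 + 8 * x^2 * y^2) * ((x - 2)^2 + 8 * x^2 * y^2).

Definition omega_plus (x y : R) : R :=
  (x^2 - 4 + sqrt (Delta x y)) / (2 * r1sq x y).

Definition omega_minus (x y : R) : R :=
  (x^2 - 4 - sqrt (Delta x y)) / (2 * r1sq x y).

Definition p0 : R * R := (2, 0).

Definition inR (z : R * R) : Prop :=
  let (x, y) := z in
  0 < x /\ 4 - 4 * y^2 - x^2 * y^2 - 8 * x^2 * y^4 >= 0.

Definition Wgen (w x y : R) : R * R :=
  ((1 + w) / (1 - w) * x, Rabs w / (1 + w) * y).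

Definition Wplus (z : R * R) : R * R :=
  let (x, y) := z in Wgen (omega_plus x y) x y.

Definition Wminus (z : R * R) : R * R :=
  let (x, y) := z in Wgen (omega_minus x y) x y.

(* W: W_+ for x<2, W_- for x>2, W(p0)=p0; the value on the line x=2
   away from p0 (where W is undefined) is irrelevant and set to the identity. *)
Definition W (z : R * R) : R * R :=
  let (x, y) := z in
  if Rlt_dec x 2 then Wplus z
  else if Rlt_dec 2 x then Wminus z
  else z.

Definition in_dom_W (z : R * R) : Prop :=
  inR z /\ (fst z = 2 -> z = p0).

Definition is_W_orbit (z : nat -> R * R) : Prop :=
  forall k, in_dom_W (z k) /\ z (S k) = W (z k).

Definition inV (a : R) (z : R * R) : Prop :=
  let (x, y) := z in Rabs y <= a /\ Rabs y >= Rabs (x - 2) / 10.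

From Pilot Require Import Defs.
From Stdlib Require Import Reals Lra Psatz.
From Coquelicot Require Import Coquelicot.
Open Scope R_scope.

(* The parameter w of a step W(x,y) = ((1+w)/(1-w) x, |w|/(1+w) y) is a root of
   r1^2 w^2 - (x^2-4) w - 4 x^2 y^2 = 0, and the branch is chosen so that
   (x^2-4) w <= 0. Hence |w| <= 2|y| and |w| |x-2| (x+2) <= 4 x^2 y^2: a step
   moves x by O(y^2 / |x-2|) and multiplies |y| by O(|y|). Outside the cone
   |x-2| > 10|y| the gap |x-2| - 10|y| therefore never decreases near p0 and
   stays positive everywhere; this gives the invariance of the complement of
   V_a, and shows that an orbit leaving the cone near p0 cannot converge to p0.
   Inside the cone, |y| contracts by a factor 1/4 per step while |x-2| <= 10|y|,
   so the orbit converges to p0. *)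

Lemma quadratic_root_eq (r A c s w : R) : r <> 0 -> s * s = A * A + 4 * r * c ->
  (w = (A + s) / (2 * r) \/ w = (A - s) / (2 * r)) ->
  r * w ^ 2 - A * w - c = 0.
Proof.
  intros Hr Hs Hw.
  assert (Hlin : 2 * r * w - A = s \/ 2 * r * w - A = - s).
  { destruct Hw as [-> | ->]; [left | right]; field; exact Hr. }
  assert (Hsq : (2 * r * w - A) ^ 2 = s * s) by (destruct Hlin as [-> | ->]; ring).
  apply (Rmult_eq_reg_l (4 * r)); [nra | lra].
Qed.

Lemma r1sq_ge (x y : R) : x ^ 2 + 4 <= r1sq x y.
Proof. unfold r1sq; nra. Qed.

(* Coquelicot also exports a [Delta], hence the qualified name. *)
Lemma sqrt_Delta_sqr (x y : R) :
  sqrt (Defs.Delta x y) * sqrt (Defs.Delta x y)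
  = (x ^ 2 - 4) * (x ^ 2 - 4) + 4 * r1sq x y * (4 * x ^ 2 * y ^ 2).
Proof.
  rewrite sqrt_sqrt; [unfold Defs.Delta, r1sq; ring|].
  assert (0 <= x ^ 2 * y ^ 2) by (apply Rmult_le_pos; apply pow2_ge_0).
  unfold Defs.Delta; apply Rmult_le_pos; apply Rplus_le_le_0_compat;
    try apply pow2_ge_0; lra.
Qed.

Lemma Rabs_le_sqrt_Delta (x y : R) : Rabs (x ^ 2 - 4) <= sqrt (Defs.Delta x y).
Proof.
  assert (Hdisc : 0 <= r1sq x y * (x ^ 2 * y ^ 2)).
  { pose proof (r1sq_ge x y).
    apply Rmult_le_pos; [nra | apply Rmult_le_pos; apply pow2_ge_0]. }
  rewrite <- (Rabs_pos_eq (sqrt (Defs.Delta x y))) by apply sqrt_pos.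
  apply Rsqr_le_abs_0; unfold Rsqr; rewrite sqrt_Delta_sqr; nra.
Qed.

Lemma omega_plus_ge0 (x y : R) : 0 <= omega_plus x y.
Proof.
  pose proof (Rabs_le_sqrt_Delta x y); pose proof (r1sq_ge x y).
  pose proof (Rle_abs (- (x ^ 2 - 4))) as Hneg; rewrite Rabs_Ropp in Hneg.
  unfold omega_plus; apply Rmult_le_pos; [lra|].
  apply Rlt_le, Rinv_0_lt_compat; nra.
Qed.

Lemma omega_minus_le0 (x y : R) : omega_minus x y <= 0.
Proof.
  pose proof (Rabs_le_sqrt_Delta x y); pose proof (r1sq_ge x y).
  pose proof (Rle_abs (x ^ 2 - 4)).
  unfold omega_minus, Rdiv; apply Rmult_le_0_r; [lra|].
  apply Rlt_le, Rinv_0_lt_compat; nra.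
Qed.

Lemma omega_root (x y w : R) : w = omega_plus x y \/ w = omega_minus x y ->
  r1sq x y * w ^ 2 - (x ^ 2 - 4) * w - 4 * x ^ 2 * y ^ 2 = 0.
Proof.
  intros Hw; apply (quadratic_root_eq _ _ _ (sqrt (Defs.Delta x y))).
  - pose proof (r1sq_ge x y); nra.
  - apply sqrt_Delta_sqr.
  - exact Hw.
Qed.

Lemma omega_small (x y w : R) : 0 < x ->
  w = omega_plus x y \/ w = omega_minus x y -> (x ^ 2 - 4) * w <= 0 ->
  Rabs w <= 2 * Rabs y /\ Rabs w * Rabs (x - 2) * (x + 2) <= 4 * x ^ 2 * y ^ 2.
Proof.
  intros Hx Hw Hsign.
  pose proof (omega_root x y w Hw) as Hroot; pose proof (r1sq_ge x y).
  assert (Hw2 : w ^ 2 <= 4 * y ^ 2).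
  { assert (Hxw : x ^ 2 * w ^ 2 <= x ^ 2 * (4 * y ^ 2)) by nra.
    apply (Rmult_le_reg_l (x ^ 2)); nra. }
  split.
  - rewrite <- (Rabs_pos_eq 2), <- Rabs_mult by lra.
    apply Rsqr_le_abs_0; unfold Rsqr; nra.
  - rewrite <- (Rabs_pos_eq (x + 2)), <- !Rabs_mult by lra.
    replace ((w * (x - 2)) * (x + 2)) with ((x ^ 2 - 4) * w) by ring.
    rewrite Rabs_left1 by exact Hsign; nra.
Qed.

Lemma W_eq_Wgen (x y : R) : 0 < x -> x <> 2 ->
  exists w, W (x, y) = Wgen w x y /\
    Rabs w <= 2 * Rabs y /\ Rabs w * Rabs (x - 2) * (x + 2) <= 4 * x ^ 2 * y ^ 2.
Proof.
  intros Hx Hx2; unfold W.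
  destruct (Rlt_dec x 2) as [Hlt | Hge].
  - exists (omega_plus x y); split; [reflexivity|].
    apply omega_small; [exact Hx | left; reflexivity|].
    assert (x ^ 2 - 4 < 0) by nra.
    pose proof (omega_plus_ge0 x y); nra.
  - destruct (Rlt_dec 2 x) as [Hgt | Hle]; [|lra].
    exists (omega_minus x y); split; [reflexivity|].
    apply omega_small; [exact Hx | right; reflexivity|].
    assert (0 < x ^ 2 - 4) by nra.
    pose proof (omega_minus_le0 x y); nra.
Qed.

Lemma Wgen_snd_bound (w x y : R) : Rabs w < 1 ->
  (1 - Rabs w) * Rabs (snd (Wgen w x y)) <= Rabs w * Rabs y.
Proof.
  intros Hw.
  assert (Hden : 1 - Rabs w <= 1 + w)
    by (pose proof (Rle_abs (- w)); rewrite Rabs_Ropp in *; lra).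
  assert (Heq : snd (Wgen w x y) * (1 + w) = Rabs w * y) by (simpl; field; lra).
  assert (Habs : Rabs (snd (Wgen w x y)) * (1 + w) = Rabs w * Rabs y).
  { rewrite <- (Rabs_pos_eq (1 + w)), <- Rabs_mult, Heq, Rabs_mult, Rabs_Rabsolu by lra.
    reflexivity. }
  pose proof (Rabs_pos (snd (Wgen w x y))); nra.
Qed.

Lemma Wgen_fst_bound (w x y : R) : Rabs w < 1 ->
  (1 - Rabs w) * Rabs (fst (Wgen w x y) - x) <= 2 * Rabs w * Rabs x.
Proof.
  intros Hw.
  assert (Hden : 1 - Rabs w <= 1 - w) by (pose proof (Rle_abs w); lra).
  assert (Heq : (fst (Wgen w x y) - x) * (1 - w) = 2 * w * x) by (simpl; field; lra).
  assert (Habs : Rabs (fst (Wgen w x y) - x) * (1 - w) = 2 * Rabs w * Rabs x).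
  { rewrite <- (Rabs_pos_eq (1 - w)), <- Rabs_mult, Heq, !Rabs_mult, (Rabs_pos_eq 2) by lra.
    reflexivity. }
  pose proof (Rabs_pos (fst (Wgen w x y) - x)); nra.
Qed.

Lemma W_step_bounds (x y : R) : 0 < x -> x <> 2 -> Rabs y < 1/2 ->
  exists m, (0 <= m <= 2 * Rabs y) /\
    m * Rabs (x - 2) * (x + 2) <= 4 * x ^ 2 * Rabs y ^ 2 /\
    (1 - m) * Rabs (snd (W (x, y))) <= m * Rabs y /\
    (1 - m) * Rabs (fst (W (x, y)) - x) <= 2 * m * x.
Proof.
  intros Hx Hx2 Hy.
  destruct (W_eq_Wgen x y Hx Hx2) as [w [-> [Hw Hwx]]].
  assert (Hw1 : Rabs w < 1) by lra.
  exists (Rabs w); split; [split; [apply Rabs_pos | exact Hw]|].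
  split; [rewrite pow2_abs; exact Hwx|].
  split; [apply Wgen_snd_bound; exact Hw1|].
  pose proof (Wgen_fst_bound w x y Hw1) as Hfst.
  rewrite (Rabs_pos_eq x) in Hfst by lra; exact Hfst.
Qed.

Lemma cone_step_near (x u b m e Y : R) : 0 < x <= 4 -> 0 <= b <= 1/100 -> 10 * b < u ->
  0 <= m <= 2 * b -> m * u * (x + 2) <= 4 * x ^ 2 * b ^ 2 ->
  0 <= Y -> (1 - m) * Y <= m * b -> 0 <= e -> (1 - m) * e <= 2 * m * x ->
  e + 10 * Y <= 10 * b.
Proof.
  intros Hx Hb Hu Hm Hmu HY0 HY He0 He.
  assert (Hm1 : 10 * m * (x + 2) <= 4 * x ^ 2 * b).
  { apply (Rmult_le_reg_r u); [lra|].
    assert (0 <= x ^ 2 * b) by (apply Rmult_le_pos; [apply pow2_ge_0 | lra]).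
    nra. }
  assert (Hcubic : 4 * x ^ 2 * (2 * x + 1/10) <= 90 * (x + 2)) by nra.
  assert (Hm2 : m * (2 * x + 1/10) <= 9 * b).
  { apply (Rmult_le_reg_r (10 * (x + 2))); [lra|].
    assert (0 <= 2 * x + 1/10) by lra.
    nra. }
  nra.
Qed.

Lemma cone_step_far (x b m e Y : R) : 4 <= x -> 0 <= b <= 1/100 ->
  0 <= m <= 2 * b -> m * (x - 2) * (x + 2) <= 4 * x ^ 2 * b ^ 2 ->
  0 <= Y -> (1 - m) * Y <= m * b -> 0 <= e -> (1 - m) * e <= 2 * m * x ->
  e + 10 * Y < x - 2.
Proof.
  intros Hx Hb Hm Hmu HY0 HY He0 He.
  assert (Hsum : (1 - m) * (e + 10 * Y) <= 2 * m * (x + 2)) by nra.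
  assert (Hsq : 8 * x ^ 2 * b ^ 2 <= (x - 2) ^ 2 / 100).
  { assert (b ^ 2 <= 1/10000) by nra. assert (x ^ 2 <= 4 * (x - 2) ^ 2) by nra. nra. }
  assert (Hlin : (1 - m) * (e + 10 * Y) <= (x - 2) / 50).
  { apply (Rmult_le_reg_r (x - 2)); [lra|]. nra. }
  nra.
Qed.

Definition cone_gap (z : R * R) : R := Rabs (fst z - 2) - 10 * Rabs (snd z).

Lemma inV_iff (a : R) (z : R * R) :
  inV a z <-> Rabs (snd z) <= a /\ cone_gap z <= 0.
Proof. destruct z as [x y]; unfold inV, cone_gap; simpl; lra. Qed.

Lemma cone_gap_ge (x y : R) (z : R * R) :
  cone_gap (x, y) + (10 * Rabs y - 10 * Rabs (snd z) - Rabs (fst z - x)) <= cone_gap z.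
Proof.
  unfold cone_gap; simpl.
  pose proof (Rabs_triang (fst z - 2) (x - fst z)) as Htri.
  replace (fst z - 2 + (x - fst z)) with (x - 2) in Htri by ring.
  rewrite (Rabs_minus_sym x (fst z)) in Htri; lra.
Qed.

Lemma cone_gap_W_mono (x y : R) : 0 < x <= 4 -> Rabs y <= 1/100 -> 0 < cone_gap (x, y) ->
  cone_gap (x, y) <= cone_gap (W (x, y)).
Proof.
  intros Hx Hy Hgap; unfold cone_gap in Hgap; simpl in Hgap.
  assert (Hx2 : x <> 2) by (intros ->; rewrite Rminus_diag, Rabs_R0 in Hgap;
                              pose proof (Rabs_pos y); lra).
  destruct (W_step_bounds x y (proj1 Hx) Hx2 ltac:(lra)) as [m [Hm [Hmu [HY He]]]].
  pose proof (cone_step_near x (Rabs (x - 2)) (Rabs y) m _ _ Hx (conj (Rabs_pos y) Hy)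
                ltac:(lra) Hm Hmu (Rabs_pos _) HY (Rabs_pos _) He).
  pose proof (cone_gap_ge x y (W (x, y))); lra.
Qed.

Lemma cone_gap_W_pos (x y : R) : 0 < x -> Rabs y <= 1/100 -> 0 < cone_gap (x, y) ->
  0 < cone_gap (W (x, y)).
Proof.
  intros Hx Hy Hgap.
  destruct (Rle_dec x 4) as [Hx4 | Hx4].
  - pose proof (cone_gap_W_mono x y (conj Hx Hx4) Hy Hgap); lra.
  - destruct (W_step_bounds x y Hx ltac:(lra) ltac:(lra)) as [m [Hm [Hmu [HY He]]]].
    rewrite (Rabs_pos_eq (x - 2)) in Hmu by lra.
    pose proof (cone_step_far x _ m _ _ ltac:(lra) (conj (Rabs_pos y) Hy) Hm Hmu
                  (Rabs_pos _) HY (Rabs_pos _) He).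
    pose proof (cone_gap_ge x y (W (x, y))).
    unfold cone_gap in *; simpl in *; rewrite (Rabs_pos_eq (x - 2)) in * by lra; lra.
Qed.

Lemma W_p0 : W p0 = p0.
Proof.
  unfold W, p0; destruct (Rlt_dec 2 2); [lra|]; destruct (Rlt_dec 2 2); [lra|reflexivity].
Qed.

Lemma W_snd_contract (z : R * R) : in_dom_W z -> Rabs (snd z) <= 1/10 ->
  Rabs (snd (W z)) <= Rabs (snd z) / 4.
Proof.
  destruct z as [x y]; intros [[Hx _] Hdom] Hy; cbn [fst snd] in *.
  destruct (Req_dec x 2) as [Hx2 | Hx2].
  - injection (Hdom Hx2) as -> ->.
    change (2, 0) with p0; rewrite W_p0; simpl; rewrite Rabs_R0; lra.
  - destruct (W_step_bounds x y Hx Hx2 ltac:(lra)) as [m [Hm [_ [HY _]]]].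
    pose proof (Rabs_pos (snd (W (x, y)))); pose proof (Rabs_pos y); nra.
Qed.

Lemma W_outside_cone (a x y : R) : a <= 1/100 -> 0 < x -> Rabs y <= a ->
  ~ inV a (x, y) -> ~ inV a (W (x, y)).
Proof.
  intros Ha Hx Hy; rewrite !inV_iff; cbn [fst snd]; intros Hout [_ Hin].
  assert (Hgap : 0 < cone_gap (x, y)) by (apply Rnot_le_lt; intros Hle; auto).
  pose proof (cone_gap_W_pos x y Hx ltac:(lra) Hgap); lra.
Qed.

Lemma ball_p0 (eps : R) (z : R * R) :
  ball p0 eps z <-> Rabs (fst z - 2) < eps /\ Rabs (snd z) < eps.
Proof.
  destruct z as [x y].
  change (ball p0 eps (x, y)) with (Rabs (x - 2) < eps /\ Rabs (y - 0) < eps).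
  rewrite Rminus_0_r; reflexivity.
Qed.

Lemma orbit_cone_gap_mono (z : nat -> R * R) (k : nat) : is_W_orbit z ->
  (forall j, (k <= j)%nat -> 0 < fst (z j) <= 4 /\ Rabs (snd (z j)) <= 1/100) ->
  0 < cone_gap (z k) -> forall j, cone_gap (z k) <= cone_gap (z (k + j)%nat).
Proof.
  intros Hz Hnear Hgap; induction j as [|j IH].
  - rewrite Nat.add_0_r; lra.
  - rewrite Nat.add_succ_r, (proj2 (Hz _)).
    destruct (Hnear (k + j)%nat ltac:(lia)) as [Hx Hy].
    destruct (z (k + j)%nat) as [x y]; cbn [fst snd] in *.
    pose proof (cone_gap_W_mono x y Hx Hy ltac:(lra)); lra.
Qed.

Lemma orbit_cvg_in_cone (z : nat -> R * R) : is_W_orbit z ->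
  filterlim z eventually (locally p0) ->
  exists k0, forall k, (k0 <= k)%nat -> inV (1/100) (z k).
Proof.
  intros Hz Hlim; pose proof (proj1 (filterlim_locally z p0) Hlim) as Hball.
  destruct (Hball (mkposreal (1/100) ltac:(lra))) as [N HN]; cbn in HN.
  assert (Hnear : forall j, (N <= j)%nat -> 0 < fst (z j) <= 4 /\ Rabs (snd (z j)) <= 1/100).
  { intros j Hj; destruct (proj1 (ball_p0 _ _) (HN j Hj)) as [Hx Hy].
    apply Rabs_lt_between' in Hx; lra. }
  exists N; intros k Hk; apply inV_iff; split; [apply Hnear, Hk|].
  apply Rnot_lt_le; intros Hgap.
  destruct (Hball (mkposreal _ Hgap)) as [M HM]; cbn in HM.
  destruct (proj1 (ball_p0 _ _) (HM (k + M)%nat ltac:(lia))) as [Hx _].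
  pose proof (orbit_cone_gap_mono z k Hz
                (fun j Hj => Hnear j (Nat.le_trans _ _ _ Hk Hj)) Hgap M) as Hmono.
  unfold cone_gap at 2 in Hmono; pose proof (Rabs_pos (snd (z (k + M)%nat))); lra.
Qed.

Lemma orbit_snd_geometric (z : nat -> R * R) (k0 : nat) (a : R) : is_W_orbit z ->
  a <= 1/10 -> (forall k, (k0 <= k)%nat -> inV a (z k)) ->
  forall j, Rabs (snd (z (k0 + j)%nat)) <= (1/4) ^ j * a.
Proof.
  intros Hz Ha Hcone; induction j as [|j IH].
  - rewrite Nat.add_0_r, pow_O, Rmult_1_l; apply (inV_iff a), Hcone; lia.
  - rewrite Nat.add_succ_r; destruct (Hz (k0 + j)%nat) as [Hdom ->].
    pose proof (proj1 (proj1 (inV_iff a _) (Hcone (k0 + j)%nat ltac:(lia)))) as Hy.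
    pose proof (W_snd_contract _ Hdom ltac:(lra)); simpl pow; lra.
Qed.

Lemma orbit_in_cone_cvg (z : nat -> R * R) (k0 : nat) (a : R) : is_W_orbit z ->
  a <= 1/10 -> (forall k, (k0 <= k)%nat -> inV a (z k)) ->
  filterlim z eventually (locally p0).
Proof.
  intros Hz Ha Hcone; apply filterlim_locally; intros [eps Heps]; cbn.
  destruct (pow_lt_1_zero (1/4) ltac:(rewrite Rabs_pos_eq; lra) (eps / 10) ltac:(lra))
    as [N HN].
  exists (k0 + N)%nat; intros k Hk.
  pose proof (orbit_snd_geometric z k0 a Hz Ha Hcone (k - k0)) as Hy.
  replace (k0 + (k - k0))%nat with k in Hy by lia.
  specialize (HN (k - k0)%nat ltac:(lia)); rewrite Rabs_pos_eq in HN by (apply pow_le; lra).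
  assert (Hpow : (1/4) ^ (k - k0) * a <= (1/4) ^ (k - k0) * (1/10))
    by (apply Rmult_le_compat_l; [apply pow_le|]; lra).
  apply ball_p0; destruct (proj1 (inV_iff a _) (Hcone k ltac:(lia))) as [_ Hgap].
  unfold cone_gap in Hgap; split; lra.
Qed.

Theorem lemma5p2 :
  (exists a0 : R, 0 < a0 /\
     forall a : R, 0 < a -> a <= a0 -> a <= 1/10 ->
       forall x y : R, inR (x, y) -> x <> 2 -> Rabs y <= a ->
         ~ inV a (x, y) -> ~ inV a (W (x, y)))
  /\
  (forall z : nat -> R * R, is_W_orbit z ->
     (filterlim z eventually (locally p0) <->
      exists a' : R, 0 < a' /\ a' <= 1/10 /\
        exists k0 : nat, forall k : nat, (k0 <= k)%nat -> inV a' (z k))).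
Proof.
  split.
  - exists (1/100); split; [lra|].
    intros a _ Ha _ x y [Hx _] _; apply W_outside_cone; assumption.
  - intros z Hz; split.
    + intros Hlim; exists (1/100); split; [lra|]; split; [lra|].
      exact (orbit_cvg_in_cone z Hz Hlim).
    + intros [a [_ [Ha [k0 Hcone]]]]; exact (orbit_in_cone_cvg z k0 a Hz Ha Hcone).
Qed.
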